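(* Let $R>0$ and let $A\subset\mathbb{R}^d$ be such that $A$ and $\overline{A^c}$ are $R$-supported bodies. If $a_0\in\partial A\cap\partial\overline{A^c}$, then there exist $y_0,y_1\in\mathbb{R}^d$ such that (i) $B(y_0)\subset A^c$ and $B(y_1)\subset(\overline{A^c})^c=\operatorname{int}(A)$; (ii) $B(y_0)\cap B(y_1)=\emptyset$ and $\partial B(y_0)\cap\partial B(y_1)=\{a_0\}$.
   Context: A body is a nonempty closed subset of $\mathbb{R}^d$; $A^c=\mathbb{R}^d\setminus A$, $\overline{X}$ denotes closure; $B(x)=\{y:|y-x|<R\}$; $S^{d-1}$ the unit sphere. For a body $A$ and $a\in\partial A$, $\mathcal{N}_R(A,a)=\{v\in S^{d-1}: A\cap B(a+Rv)=\emptyset\}$; $A$ is $R$-supported if $\mathcal{N}_R(A,a)\ne\emptyset$ for all $a\in\partial A$. *)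

(* points of R^d are row vectors 'rV[R]_d over R : realType,
   with the Euclidean norm defined explicitly. Subsets are predicates. *)
From mathcomp Require Import all_boot all_order all_algebra.
From mathcomp Require Import reals.
Set Implicit Arguments. Unset Strict Implicit. Unset Printing Implicit Defensive.
Import Order.TTheory GRing.Theory Num.Theory.
Local Open Scope ring_scope.

Section Defs.
Variables (R : realType) (d : nat).
Local Notation pt := 'rV[R]_d.

Definition enorm (x : pt) : R := Num.sqrt (\sum_(i < d) (x 0 i) ^+ 2).
Definition edist (x y : pt) : R := enorm (x - y).

Definition oball (r : R) (x : pt) : pt -> Prop := fun y => edist y x < r.

Definition compl (A : pt -> Prop) : pt -> Prop := fun x => ~ A x.

Definition eclosure (A : pt -> Prop) : pt -> Prop :=
  fun x => forall e : R, 0 < e -> exists a, A a /\ edist x a < e.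

Definition eclosed (A : pt -> Prop) : Prop := forall x, eclosure A x -> A x.

Definition bdry (A : pt -> Prop) : pt -> Prop :=
  fun x => eclosure A x /\ eclosure (compl A) x.

Definition body (A : pt -> Prop) : Prop := (exists a, A a) /\ eclosed A.

Definition unit_sphere : pt -> Prop := fun v => enorm v = 1.

Definition normal_cone (r : R) (A : pt -> Prop) (a : pt) : pt -> Prop :=
  fun v => unit_sphere v /\ (forall y, ~ (A y /\ oball r (a + r *: v) y)).

Definition R_supported (r : R) (A : pt -> Prop) : Prop :=
  body A /\ forall a, bdry A a -> exists v, normal_cone r A a v.

End Defs.

(* The outer normal ball of A and the outer normal ball of the closure of A^c at
   a0 are disjoint open balls of radius r, both with a0 on their sphere.  Two such
   balls B(a0 + r v) and B(a0 + r w) overlap unless w = -v (by the parallelogram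
   law their centres are less than 2r apart otherwise), and two opposite balls
   touching at a0 have a0 as the only common point of their closures. *)
From mathcomp Require Import all_boot all_order all_algebra.
From mathcomp Require Import reals.
From mathcomp Require Import ring lra.
Import Order.TTheory GRing.Theory Num.Theory.
Set Implicit Arguments. Unset Strict Implicit.
Local Open Scope ring_scope.

Section EuclideanNorm.
Variables (R : realType) (d : nat).
Implicit Types (x y u w : 'rV[R]_d).

Lemma enorm_ge0 x : 0 <= enorm x.
Proof. exact: sqrtr_ge0. Qed.

Lemma sqr_enorm x : enorm x ^+ 2 = \sum_(i < d) x 0 i ^+ 2.
Proof. by rewrite sqr_sqrtr // sumr_ge0 // => i _; rewrite sqr_ge0. Qed.

Lemma enorm_eq0 x : (enorm x == 0) = (x == 0).
Proof.
apply/eqP/eqP => [|->]; last first.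
  by rewrite /enorm big1 ?sqrtr0 // => i _; rewrite mxE expr0n.
move/(congr1 (fun t => t ^+ 2)); rewrite sqr_enorm expr0n /= => /eqP.
rewrite psumr_eq0 => [/allP x0|i _]; last exact: sqr_ge0.
apply/rowP => i; rewrite mxE; apply/eqP.
by rewrite -sqrf_eq0 (implyP (x0 i (mem_index_enum _))).
Qed.

Lemma enorm0 : enorm (0 : 'rV[R]_d) = 0.
Proof. by apply/eqP; rewrite enorm_eq0. Qed.

Lemma enormZ c x : enorm (c *: x) = `|c| * enorm x.
Proof.
rewrite /enorm -sqrtr_sqr -sqrtrM ?sqr_ge0 // mulr_sumr.
by congr Num.sqrt; apply: eq_bigr => i _; rewrite mxE exprMn.
Qed.

Lemma enormN x : enorm (- x) = enorm x.
Proof. by rewrite -scaleN1r enormZ normrN normr1 mul1r. Qed.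

Lemma enorm_parallelogram u w :
  enorm (u + w) ^+ 2 + enorm (u - w) ^+ 2 = 2 * enorm u ^+ 2 + 2 * enorm w ^+ 2.
Proof.
rewrite !sqr_enorm -big_split !mulr_sumr -big_split.
by apply: eq_bigr => i _ /=; rewrite !mxE; ring.
Qed.

Lemma sqr_enormD_le s u w : 0 < s ->
  enorm (u + w) ^+ 2 <= (1 + s) * enorm u ^+ 2 + (1 + s^-1) * enorm w ^+ 2.
Proof.
move=> s_gt0; rewrite !sqr_enorm !mulr_sumr -big_split ler_sum // => i _.
rewrite /= !mxE -subr_ge0.
have -> : (1 + s) * u 0 i ^+ 2 + (1 + s^-1) * w 0 i ^+ 2 - (u 0 i + w 0 i) ^+ 2
          = (s * u 0 i - w 0 i) ^+ 2 / s by field; rewrite gt_eqF.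
by rewrite divr_ge0 ?sqr_ge0 ?ltW.
Qed.

Lemma enormD_le u w : enorm (u + w) <= enorm u + enorm w.
Proof.
have [/eqP|u_neq0] := eqVneq (enorm u) 0.
  by rewrite enorm_eq0 => /eqP->; rewrite add0r enorm0 add0r.
have [/eqP|w_neq0] := eqVneq (enorm w) 0.
  by rewrite enorm_eq0 => /eqP->; rewrite addr0 enorm0 addr0.
have u_gt0 : 0 < enorm u by rewrite lt_def u_neq0 enorm_ge0.
have w_gt0 : 0 < enorm w by rewrite lt_def w_neq0 enorm_ge0.
rewrite -ler_sqr ?nnegrE ?addr_ge0 ?enorm_ge0 //.
apply: (le_trans (sqr_enormD_le u w (divr_gt0 w_gt0 u_gt0))).
by rewrite le_eqVlt; apply/orP; left; apply/eqP; field; rewrite ?gt_eqF.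
Qed.

Lemma enorm_lt x e : 0 < e -> (enorm x < e) = (enorm x ^+ 2 < e ^+ 2).
Proof. by move=> e_gt0; rewrite ltr_sqr ?nnegrE ?enorm_ge0 ?ltW. Qed.

Lemma enorm_le x e : 0 <= e -> (enorm x <= e) = (enorm x ^+ 2 <= e ^+ 2).
Proof. by move=> e_ge0; rewrite ler_sqr ?nnegrE ?enorm_ge0. Qed.

End EuclideanNorm.

Section Balls.
Variables (R : realType) (d : nat) (r : R).
Hypothesis r_gt0 : 0 < r.
Implicit Types (a x y v w : 'rV[R]_d) (A : 'rV[R]_d -> Prop).

Lemma eclosure_sub A x : A x -> eclosure A x.
Proof. by move=> Ax e e_gt0; exists x; rewrite /edist subrr enorm0. Qed.

Lemma eclosure_oball_le y x : eclosure (oball r y) x -> enorm (x - y) <= r.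
Proof.
move=> clx; apply/ler_addgt0Pr => e /clx [z [zB xz]].
rewrite -(subrK z x) -addrA addrC.
by apply: (le_trans (enormD_le _ _)); rewrite ltW // ltrD.
Qed.

Lemma bdry_oball y x : enorm (x - y) = r -> bdry (oball r y) x.
Proof.
move=> xy; split; last first.
  by move=> e e_gt0; exists x; rewrite /compl /oball /edist xy ltxx subrr enorm0.
move=> e e_gt0; set t := e / (e + r).
have t_gt0 : 0 < t by rewrite divr_gt0 ?addr_gt0.
have t_lt1 : t < 1 by rewrite ltr_pdivrMr ?addr_gt0 // mul1r ltrDl.
have tr_lt : t * r < e by rewrite mulrAC ltr_pdivrMr ?addr_gt0 // mulrDr ltrDr mulr_gt0.
exists (x + t *: (y - x)); rewrite /oball /edist; split.
  have -> : x + t *: (y - x) - y = (1 - t) *: (x - y).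
    by apply/rowP => i; rewrite !mxE; ring.
  rewrite enormZ xy ger0_norm ?subr_ge0 ?ltW //.
  by have := mulr_gt0 t_gt0 r_gt0; lra.
have -> : x - (x + t *: (y - x)) = t *: (x - y) by apply/rowP => i; rewrite !mxE; ring.
by rewrite enormZ xy gtr0_norm.
Qed.

Lemma disjoint_oballs_opposite a v w : enorm v = 1 -> enorm w = 1 ->
  (forall x, ~ (oball r (a + r *: v) x /\ oball r (a + r *: w) x)) -> w = - v.
Proof.
move=> v1 w1 disj; apply/eqP; rewrite -addr_eq0 addrC -enorm_eq0.
rewrite eq_le enorm_ge0 andbT leNgt; apply/negP => vw_gt0.
have vw_lt2 : enorm (v - w) < 2.
  rewrite enorm_lt //; have := enorm_parallelogram v w; rewrite v1 w1.
  have := mulr_gt0 vw_gt0 vw_gt0; rewrite -expr2; lra.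
apply: (disj (a + (r / 2) *: (v + w))); rewrite /oball /edist.
have -> : a + (r / 2) *: (v + w) - (a + r *: v) = (r / 2) *: (w - v).
  by apply/rowP => i; rewrite !mxE; field.
have -> : a + (r / 2) *: (v + w) - (a + r *: w) = (r / 2) *: (v - w).
  by apply/rowP => i; rewrite !mxE; field.
rewrite !enormZ -(opprB v w) enormN ger0_norm ?divr_ge0 ?ltW //.
by rewrite mulrAC; have := vw_lt2; rewrite -(ltr_pM2l r_gt0); split; lra.
Qed.

Lemma bdry_opposite_oballs a v x : enorm v = 1 ->
  (bdry (oball r (a + r *: v)) x /\ bdry (oball r (a - r *: v)) x) <-> x = a.
Proof.
move=> v1; split=> [[[clx0 _] [clx1 _]]|->].
  have := eclosure_oball_le clx0; have := eclosure_oball_le clx1.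
  have -> : x - (a + r *: v) = (x - a) - r *: v by apply/rowP => i; rewrite !mxE; ring.
  have -> : x - (a - r *: v) = (x - a) + r *: v by apply/rowP => i; rewrite !mxE; ring.
  rewrite !enorm_le ?(ltW r_gt0) // => le1 le0.
  have := enorm_parallelogram (x - a) (r *: v).
  rewrite enormZ v1 mulr1 gtr0_norm // => par.
  have : enorm (x - a) ^+ 2 == 0 by rewrite eq_le sqr_ge0 andbT; lra.
  by rewrite sqrf_eq0 enorm_eq0 subr_eq0 => /eqP.
split; apply: bdry_oball.
  by rewrite opprD addrA subrr add0r enormN enormZ v1 mulr1 gtr0_norm.
by rewrite opprB addrC subrK enormZ v1 mulr1 gtr0_norm.
Qed.

End Balls.

Theorem mainTheorem8 (R : realType) (d : nat) (r : R) (A : 'rV[R]_d -> Prop)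
  (hr : 0 < r)
  (hA : R_supported r A)
  (hAc : R_supported r (eclosure (compl A)))
  (a0 : 'rV[R]_d)
  (ha0 : bdry A a0 /\ bdry (eclosure (compl A)) a0) :
  exists y0 y1 : 'rV[R]_d,
    (forall x, oball r y0 x -> compl A x) /\
    (forall x, oball r y1 x -> compl (eclosure (compl A)) x) /\
    (forall x, ~ (oball r y0 x /\ oball r y1 x)) /\
    (forall x, (bdry (oball r y0) x /\ bdry (oball r y1) x) <-> x = a0).
Proof.
case: hA => _ /(_ a0 ha0.1) [v [v1 vA]].
case: hAc => _ /(_ a0 ha0.2) [w [w1 wAc]].
have B0A : forall x, oball r (a0 + r *: v) x -> compl A x.
  by move=> x B0x Ax; apply: (vA x).
have B1Ac : forall x, oball r (a0 + r *: w) x -> compl (eclosure (compl A)) x.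
  by move=> x B1x Acx; apply: (wAc x).
have disj : forall x, ~ (oball r (a0 + r *: v) x /\ oball r (a0 + r *: w) x).
  by move=> x [B0x B1x]; apply: (B1Ac x B1x); apply/eclosure_sub/B0A.
have wv := disjoint_oballs_opposite hr v1 w1 disj.
rewrite wv scalerN in B1Ac disj.
exists (a0 + r *: v), (a0 - r *: v).
split; first exact: B0A.
split; first exact: B1Ac.
split; first exact: disj.
move=> x; exact: (bdry_opposite_oballs hr a0 x v1).
Qed.
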